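(* Let $q$ be odd and $k,\ell\ge0$. If $\mathcal S_q$ is nonempty, then $D_k(a)=D_\ell(a)$ for all $a\in\mathcal S_q$ iff $k\equiv\pm\ell\pmod{q-1}$. Also, $D_k(b)=D_\ell(b)$ for all $b\in\mathcal N_q$ iff $k\equiv\pm\ell\pmod{q+1}$.
   Context: $D_k\in\mathbb Z[x]$: $D_0=2$, $D_1=x$, $D_{k+2}=xD_{k+1}-D_k$, viewed as functions on ${\mathbb F}_q$. $\mathcal S_q=\{a\in{\mathbb F}_q:a^2-4\text{ is a nonzero square in }{\mathbb F}_q\}$, $\mathcal N_q=\{a\in{\mathbb F}_q:a^2-4\text{ is a nonsquare in }{\mathbb F}_q\}$. *)

From HB Require Import structures.
From mathcomp Require Import all_boot all_order all_algebra all_field.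
Set Implicit Arguments. Unset Strict Implicit. Unset Printing Implicit Defensive.
Import GRing.Theory.
Local Open Scope ring_scope.

(* Dickson polynomials D_k (with parameter 1), evaluated at a point of a ring:
   D_0 = 2, D_1 = x, D_{k+2} = x D_{k+1} - D_k.
   Dpair k x = (D_k(x), D_{k+1}(x)). *)
Fixpoint Dpair (R : pzRingType) (k : nat) (x : R) : R * R :=
  match k with
  | 0%N => (2%:R, x)
  | k'.+1 => let p := Dpair k' x in (p.2, x * p.2 - p.1)
  end.

Definition D (R : pzRingType) (k : nat) (x : R) : R := (Dpair k x).1.

Definition nz_square (F : finFieldType) (a : F) : bool :=
  (a != 0) && [exists y : F, a == y ^+ 2].

Definition is_square (F : finFieldType) (a : F) : bool :=
  [exists y : F, a == y ^+ 2].

Definition Sq (F : finFieldType) : pred F := fun a => nz_square (a ^+ 2 - 4%:R).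
Definition Nq (F : finFieldType) : pred F := fun a => ~~ is_square (a ^+ 2 - 4%:R).

From HB Require Import structures.
From mathcomp Require Import all_boot all_order all_algebra all_field.
From mathcomp Require Import ring cyclic zify.
Set Implicit Arguments. Unset Strict Implicit. Unset Printing Implicit Defensive.
Import GRing.Theory.
Local Open Scope ring_scope.

(* Writing a = u + u^-1 turns D_k(a) into u^k + u^-k.  For a in S_q the point
   u lies in F_q^*, so u^(q-1) = 1; for b in N_q it lies in F_(q^2) \ F_q and is
   conjugate to u^-1, i.e. u^q = u^-1, so u^(q+1) = 1.  Either way k = +-l
   modulo the order of u suffices.  Conversely, taking for u a generator of the
   cyclic group of order q-1 (resp. q+1), the equality
   u^k + u^-k = u^l + u^-l forces u^k = u^l or u^k u^l = 1. *)

Definition eq_pm_mod (m k l : nat) : Prop :=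
  k = l %[mod m] \/ (k + l)%N = 0 %[mod m].

Lemma Dpair_rmorph (R S : pzRingType) (f : {rmorphism R -> S}) k x :
  Dpair k (f x) = (f (Dpair k x).1, f (Dpair k x).2).
Proof.
elim: k => [|k IHk] /=; first by rewrite rmorph_nat.
by rewrite IHk /= rmorphB rmorphM.
Qed.

Lemma rmorph_D (R S : pzRingType) (f : {rmorphism R -> S}) k x :
  f (D k x) = D k (f x).
Proof. by rewrite /D Dpair_rmorph. Qed.

Lemma Dpair_add_inv (R : comPzRingType) (u v : R) k : u * v = 1 ->
  Dpair k (u + v) = (u ^+ k + v ^+ k, u ^+ k.+1 + v ^+ k.+1).
Proof.
move=> uv; elim: k => [|k IHk] /=; first by rewrite !expr0 !expr1.
rewrite IHk; congr pair.
have -> : (u + v) * (u ^+ k.+1 + v ^+ k.+1)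
    = u ^+ k.+2 + v ^+ k.+2 + u * v * (u ^+ k + v ^+ k) by rewrite !exprS; ring.
by rewrite uv mul1r addrK.
Qed.

Lemma D_add_inv (R : comPzRingType) (u v : R) k : u * v = 1 ->
  D k (u + v) = u ^+ k + v ^+ k.
Proof. by move=> uv; rewrite /D Dpair_add_inv. Qed.

Lemma unity_root_neq0 (R : idomainType) (u : R) m :
  (0 < m)%N -> u ^+ m = 1 -> u != 0.
Proof.
move=> m_gt0 um; apply: contra_eqN um => /eqP->.
by rewrite expr0n eqn0Ngt m_gt0 eq_sym oner_eq0.
Qed.

Lemma add_inv_expr_eq_mod (R : comPzRingType) (u v : R) m k l :
  u * v = 1 -> u ^+ m = 1 -> eq_pm_mod m k l -> u ^+ k + v ^+ k = u ^+ l + v ^+ l.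
Proof.
move=> uv um.
have vm : v ^+ m = 1 by rewrite -(mul1r (v ^+ m)) -{1}um -exprMn uv expr1n.
have inv_pow n : (u ^+ n * v ^+ n = 1) by rewrite -exprMn uv expr1n.
case=> [kl | kl0].
  by rewrite -(expr_mod k um) -(expr_mod k vm) kl !expr_mod.
have ukl : u ^+ k * u ^+ l = 1 by rewrite -exprD -(expr_mod _ um) kl0 mod0n.
have vk : v ^+ k = u ^+ l.
  by rewrite -[v ^+ k]mulr1 -ukl mulrA (mulrC _ (u ^+ k)) inv_pow mul1r.
have vl : v ^+ l = u ^+ k.
  by rewrite -[v ^+ l]mulr1 -ukl mulrC -mulrA inv_pow mulr1.
by rewrite vk vl addrC.
Qed.

Lemma add_inv_inj (K : fieldType) (a c : K) : a != 0 -> c != 0 ->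
  a + a^-1 = c + c^-1 -> a = c \/ a * c = 1.
Proof.
move=> a0 c0 e.
have : (a - c) * (1 - (a * c)^-1) = 0.
  rewrite -[0](subrr (a + a^-1)) {2}e; field.
  by rewrite a0 c0.
by move/eqP; rewrite mulf_eq0 !subr_eq0 [1 == _]eq_sym invr_eq1 => /orP[] /eqP; [left|right].
Qed.

Lemma prim_root_add_inv_expr_eq (K : fieldType) (u : K) m k l :
  m.-primitive_root u -> u ^+ k + u^-1 ^+ k = u ^+ l + u^-1 ^+ l -> eq_pm_mod m k l.
Proof.
move=> pu; have u0 := unity_root_neq0 (prim_order_gt0 pu) (prim_expr_order pu).
rewrite !exprVn => /add_inv_inj[]; rewrite ?expf_neq0 //.
  by move/eqP; rewrite (eq_prim_root_expr pu) => /eqP; left.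
move/eqP; rewrite -exprD -(prim_order_dvd pu) => /dvdnP[z klE].
by right; rewrite klE modnMl mod0n.
Qed.

Lemma sqr_add_inv_sub4 (K : fieldType) (u : K) : u != 0 ->
  (u + u^-1) ^+ 2 - 4%:R = (u - u^-1) ^+ 2.
Proof. by move=> u0; field. Qed.

Lemma sub_inv_eq0 (K : fieldType) (u : K) : u != 0 -> (u - u^-1 == 0) = (u ^+ 2 == 1).
Proof. by move=> u0; rewrite subr_eq0 -(inj_eq (mulIf u0)) mulVf // -expr2. Qed.

Lemma add_inv_of_sqr_sub4 (K : fieldType) (a y : K) : 2%:R != 0 :> K ->
  y ^+ 2 = a ^+ 2 - 4%:R -> exists u, [/\ u != 0, a = u + u^-1 & y = u - u^-1].
Proof.
move=> two0 hy; pose u := (a + y) / 2%:R; pose v := (a - y) / 2%:R.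
have four0 : 4%:R != 0 :> K by rewrite (natrM K 2 2) mulf_neq0.
have uv : u * v = 1.
  have -> : u * v = (a ^+ 2 - y ^+ 2) / 4%:R by rewrite /u /v; field; rewrite four0.
  by rewrite hy; field.
have u0 : u != 0 by apply: contra_eq_neq uv => ->; rewrite mul0r eq_sym oner_neq0.
have uV : u^-1 = v by rewrite -[LHS]mulr1 -uv mulrA mulVf ?mul1r.
by exists u; rewrite uV; split; rewrite // /u /v; field.
Qed.

Lemma finField_two_neq0 (F : finFieldType) : odd #|F| -> 2%:R != 0 :> F.
Proof.
apply: contraL => /eqP two0.
have pchar2 : 2%N \in [pchar F] by rewrite inE two0 eqxx.
have cardF : #|F| = (2 ^ logn 2 #|F|)%N := card_pprimeChar pchar2.
have := finNzRing_gt1 F; rewrite cardF oddX orbF.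
by case: (logn 2 #|F|).
Qed.

Lemma expf_card_pred (F : finFieldType) (u : F) : u != 0 -> u ^+ #|F|.-1 = 1.
Proof.
move=> u0; apply: (mulIf u0).
by rewrite -exprSr prednK ?expf_card ?mul1r // (ltn_trans _ (finNzRing_gt1 F)).
Qed.

Lemma finField_prim_root (F : finFieldType) : exists g : F, (#|F|.-1).-primitive_root g.
Proof.
have q_gt1 := finNzRing_gt1 F.
have [||||g _ pg] := hasP (@has_prim_root F #|F|.-1 (enum (predC1 0)) _ _ _ _).
- by rewrite -ltnS prednK // ltnW.
- by apply/allP => x; rewrite mem_enum unity_rootE => /expf_card_pred ->.
- exact: enum_uniq.
- by rewrite -cardE cardC1.
by exists g.
Qed.

Lemma finField_nonsquare (F : finFieldType) :
  2%:R != 0 :> F -> exists d : F, ~~ is_square d.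
Proof.
move=> two0; apply/existsP; rewrite -negb_forall; apply/negP => /forallP all_sq.
pose sqrt x := xchoose (existsP (all_sq x)).
have sqrtK : cancel sqrt (fun y => y ^+ 2).
  by move=> x; rewrite -(eqP (xchooseP (existsP (all_sq x)))).
have sqr_inj : injective (fun y : F => y ^+ 2).
  have sqrt_bij : bijective sqrt := inj_card_bij (can_inj sqrtK) (leqnn _).
  exact/(can_inj (g := sqrt))/(bij_can_sym sqrt_bij).
have one_opp : 1 = - 1 :> F by apply: sqr_inj; rewrite /= sqrrN.
by move: two0; rewrite mulr2n {2}one_opp subrr eqxx.
Qed.

Lemma Sq_add_invP (F : finFieldType) (a : F) : 2%:R != 0 :> F ->
  Sq a <-> exists u, [/\ u != 0, u ^+ 2 != 1 & a = u + u^-1].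
Proof.
move=> two0; split.
  case/andP=> nz /existsP[y /eqP hy].
  have [u [u0 aE yE]] := add_inv_of_sqr_sub4 two0 (esym hy).
  exists u; split=> //; rewrite -sub_inv_eq0 // -yE.
  by apply: contraNneq nz => y0; rewrite hy y0 expr0n.
case=> u [u0 u2 ->]; rewrite /Sq /nz_square sqr_add_inv_sub4 //.
rewrite sqrf_eq0 sub_inv_eq0 // u2 /=.
by apply/existsP; exists (u - u^-1).
Qed.

Section Frobenius.
Variables (F : finFieldType) (L : fieldType) (iota : {rmorphism F -> L}).
Local Notation q := #|F|.

Lemma pchar_nat_card : [pchar L].-nat q.
Proof.
have [p p_pr pcharF] := finPcharP F.
have pcharL : p \in [pchar L] := rmorph_pchar iota pcharF.
by rewrite (card_pprimeChar pcharF) pnatX (pnatE _ p_pr) pcharL.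
Qed.

Lemma frobenius_add (x y : L) : (x + y) ^+ q = x ^+ q + y ^+ q.
Proof. exact: exprDn_pchar pchar_nat_card. Qed.

Lemma rmorph_expr_card x : iota x ^+ q = iota x.
Proof. by rewrite -rmorphXn expf_card. Qed.

Lemma frobenius_fixed z : z ^+ q = z -> exists x, z = iota x.
Proof.
move=> zq.
have [/mapP[x _ ->]|z_notin] := boolP (z \in map iota (enum F)); first by exists x.
have q_gt1 := finNzRing_gt1 F.
pose P : {poly L} := 'X^q - 'X.
have sizeP : size P = q.+1.
  by rewrite size_polyDl size_polyXn // size_polyN size_polyX ltnS.
have P_neq0 : P != 0 by rewrite -size_poly_eq0 sizeP.
suff : (size (z :: map iota (enum F)) < size P)%N.
  by rewrite sizeP /= size_map -cardE ltnn.
apply: max_poly_roots P_neq0 _ _; last first.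
  by rewrite /= z_notin (map_inj_uniq (fmorph_inj iota)) enum_uniq.
apply/allP => w /predU1P[->|/mapP[x _ ->]];
  by rewrite rootE !hornerE ?zq ?rmorph_expr_card subrr.
Qed.

Hypothesis two_neq0 : 2%:R != 0 :> F.

Let two_neq0L : 2%:R != 0 :> L.
Proof. by rewrite -(rmorph_nat iota) fmorph_eq0. Qed.

(* A square root of b^2 - 4 = (u - u^-1)^2 in F would put u itself in F,
   where u^q = u, contradicting u^q = u^-1 != u. *)
Lemma Nq_add_inv (u : L) : u != 0 -> u ^+ q = u^-1 -> u ^+ 2 != 1 ->
  exists2 b, Nq b & u + u^-1 = iota b.
Proof.
move=> u0 uq u2.
have [b bE] : exists b, u + u^-1 = iota b.
  by apply: frobenius_fixed; rewrite frobenius_add uq exprVn uq invrK addrC.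
exists b => //; apply/negP => /existsP[y /eqP hy].
have [z zE] : exists z, u - u^-1 = iota z.
  have : (u - u^-1) ^+ 2 == iota y ^+ 2.
    by rewrite -sqr_add_inv_sub4 // bE -(rmorph_nat iota) -!rmorphXn -rmorphB hy.
  by rewrite eqf_sqr -rmorphN => /orP[]/eqP ->; eexists.
have uE : u = iota ((b + z) / 2%:R).
  by rewrite rmorphM fmorphV rmorphD rmorph_nat -bE -zE; field; rewrite two_neq0L u0.
have uV : u^-1 = u by rewrite -uq uE rmorph_expr_card.
by move: u2; rewrite expr2 -{2}uV mulfV ?eqxx.
Qed.

Lemma add_inv_of_Nq (b : F) (s : L) : Nq b -> s ^+ 2 = iota (b ^+ 2 - 4%:R) ->
  exists u, [/\ u != 0, u ^+ q = u^-1 & iota b = u + u^-1].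
Proof.
move=> Nb s2.
have [|u [u0 bE sE]] := @add_inv_of_sqr_sub4 _ (iota b) s two_neq0L.
  by rewrite s2 rmorphB rmorphXn rmorph_nat.
exists u; split=> //.
have uq_add_inv : u ^+ q + (u ^+ q)^-1 = u + u^-1.
  by rewrite -exprVn -frobenius_add -bE rmorph_expr_card.
have [uq_u | uq_inv] := add_inv_inj (expf_neq0 _ u0) u0 uq_add_inv; last first.
  by rewrite -[u^-1]mul1r -uq_inv mulfK.
have [x uE] := frobenius_fixed uq_u.
case/negP: Nb; apply/existsP; exists (x - x^-1); apply/eqP/(fmorph_inj iota).
by rewrite -s2 sE uE rmorphXn rmorphB fmorphV.
Qed.
End Frobenius.

Lemma finField_sqrt_ext (F : finFieldType) (d : F) : ~~ is_square d ->
  exists (L : finFieldType) (iota : {rmorphism F -> L}) (s : L),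
    #|L| = (#|F| ^ 2)%N /\ s ^+ 2 = iota d.
Proof.
move=> d_nonsq; pose h : {poly F} := 'X^2 - d%:P.
have h_monic : h \is monic by exact: monicXnsubC.
have h_size : size h = 3 by rewrite size_XnsubC.
have h_mi : monic_irreducible_poly h.
  split=> //; apply: cubic_irreducible; first by rewrite h_size.
  move=> x; rewrite rootE !hornerE subr_eq0; apply: contra d_nonsq => /eqP dx.
  by apply/existsP; exists x; rewrite dx.
exists {poly %/ h with h_mi}, (qpolyC h), 'qX; split.
  by rewrite card_qfpoly h_size.
rewrite expr2 -in_qpolyM; apply: val_inj => /=.
have -> : ('X * 'X : {poly F}) = 1 * h + d%:P by rewrite mul1r subrK expr2.
rewrite (mk_monicE h_mi) Pdiv.RingMonic.rmodp_addl_mul_small // h_size size_polyC.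
by case: (d != 0).
Qed.

Lemma D_eq_on_Sq_of_mod (F : finFieldType) k l :
  odd #|F| -> eq_pm_mod #|F|.-1 k l -> forall a : F, Sq a -> D k a = D l a.
Proof.
move=> oddF kl a /(Sq_add_invP _ (finField_two_neq0 oddF))[u [u0 _ ->]].
rewrite !D_add_inv ?mulfV //.
exact: add_inv_expr_eq_mod (mulfV u0) (expf_card_pred u0) kl.
Qed.

Lemma mod_of_D_eq_on_Sq (F : finFieldType) k l : odd #|F| -> (exists a : F, Sq a) ->
  (forall a : F, Sq a -> D k a = D l a) -> eq_pm_mod #|F|.-1 k l.
Proof.
move=> /finField_two_neq0 two0 [a /(Sq_add_invP _ two0)[u [u0 u2 _]]] DS.
have [g pg] := finField_prim_root F.
have g0 := unity_root_neq0 (prim_order_gt0 pg) (prim_expr_order pg).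
have g2 : g ^+ 2 != 1.
  apply: contra u2; rewrite -(prim_order_dvd pg) => /dvdnP[c two_E].
  by rewrite two_E mulnC exprM expf_card_pred // expr1n.
apply: prim_root_add_inv_expr_eq pg _.
by rewrite -!D_add_inv ?mulfV //; apply: DS; apply/(Sq_add_invP _ two0); exists g.
Qed.

Lemma D_eq_on_Nq_of_mod (F : finFieldType) k l :
  odd #|F| -> eq_pm_mod #|F|.+1 k l -> forall b : F, Nq b -> D k b = D l b.
Proof.
move=> /finField_two_neq0 two0 kl b Nb.
have [L [iota [s [_ s2]]]] := finField_sqrt_ext Nb.
have [u [u0 uq bE]] := add_inv_of_Nq two0 Nb s2.
have u_unity : u ^+ #|F|.+1 = 1 by rewrite exprS uq mulfV.
apply: (fmorph_inj iota); rewrite !rmorph_D bE !D_add_inv ?mulfV //.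
exact: add_inv_expr_eq_mod (mulfV u0) u_unity kl.
Qed.

Lemma mod_of_D_eq_on_Nq (F : finFieldType) k l : odd #|F| ->
  (forall b : F, Nq b -> D k b = D l b) -> eq_pm_mod #|F|.+1 k l.
Proof.
move=> /finField_two_neq0 two0 DN.
have [d d_nonsq] := finField_nonsquare two0.
have [L [iota [_ [cardL _]]]] := finField_sqrt_ext d_nonsq.
have [g pg] := finField_prim_root L.
have q_gt1 : (1 < #|F|)%N := finNzRing_gt1 F.
have pu : (#|F|.+1).-primitive_root (g ^+ #|F|.-1).
  have -> : #|F|.+1 = (#|L|.-1 %/ gcdn #|F|.-1 #|L|.-1)%N.
    have -> : #|L|.-1 = (#|F|.-1 * #|F|.+1)%N by rewrite cardL expnS expn1; nia.
    by rewrite gcdnMr mulKn //; lia.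
  exact: exp_prim_root pg _.
set u := g ^+ #|F|.-1 in pu.
have u0 := unity_root_neq0 (prim_order_gt0 pu) (prim_expr_order pu).
have uq : u ^+ #|F| = u^-1.
  by apply: (mulIf u0); rewrite -exprSr (prim_expr_order pu) mulVf.
have u2 : u ^+ 2 != 1 by rewrite -(prim_order_dvd pu); apply/negP => /dvdn_leq; lia.
have [b Nb bE] := Nq_add_inv iota two0 u0 uq u2.
apply: prim_root_add_inv_expr_eq pu _.
by rewrite -!D_add_inv ?mulfV // bE -!rmorph_D DN.
Qed.

Local Close Scope ring_scope.

Theorem lemma4p3 (F : finFieldType) (k l : nat) :
  odd #|F| ->
  ((exists a : F, Sq a) ->
     ((forall a : F, Sq a -> D k a = D l a) <->
      (k = l %[mod #|F|.-1] \/ (k + l) = 0 %[mod #|F|.-1])))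
  /\
  ((forall b : F, Nq b -> D k b = D l b) <->
   (k = l %[mod #|F|.+1] \/ (k + l) = 0 %[mod #|F|.+1])).
Proof.
move=> oddF; split.
  by move=> S_nonempty; split; [exact: mod_of_D_eq_on_Sq | exact: D_eq_on_Sq_of_mod].
by split; [exact: mod_of_D_eq_on_Nq | exact: D_eq_on_Nq_of_mod].
Qed.
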